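(* Let $P(t)\in\mathbb{Q}[t]$ be an admissible Hilbert polynomial with Macaulay–Hartshorne expression $\sum_{i=0}^d\binom{t+i}{i+1}-\binom{t+i-e_i}{i+1}$, where $e_0\ge e_1\ge\dots\ge e_d>0$, and Gotzmann expression $\sum_{j=1}^r\binom{t+b_j-(j-1)}{b_j}$, where $b_1\ge b_2\ge\dots\ge b_r\ge0$. Then $r=e_0$ and the nonnegative partition $(b_1,\dots,b_r)$ is conjugate to the partition $(e_1,\dots,e_d)$; that is, for each $1\le i\le d$ exactly $e_i-e_{i+1}$ of the $b_j$ equal $i$ (where $e_{d+1}:=0$), the remaining $b_j$ being $0$.
   Context: Binomial coefficients are polynomials in $t$: $\binom{t+a}{b}=\frac{(t+a)(t+a-1)\cdots(t+a-b+1)}{b!}$ if $b\ge0$, and $0$ if $b<0$. An admissible Hilbert polynomial is the Hilbert polynomial of a nonempty closed subscheme of some projective space over an algebraically closed field; every such polynomial has a unique Macaulay–Hartshorne expression and a unique Gotzmann expression of the forms given. *)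

From mathcomp Require Import all_boot all_order all_algebra.
Set Implicit Arguments. Unset Strict Implicit. Unset Printing Implicit Defensive.
Import GRing.Theory Num.Theory.
Local Open Scope ring_scope.

(* binom a b : the polynomial binom(t + a, b) in Q[t], for a : int, b : nat
   (b >= 0 always in our uses):
   (t+a)(t+a-1)...(t+a-b+1) / b!  *)
Definition binom (a : int) (b : nat) : {poly rat} :=
  (b`!%:R)^-1 *: \prod_(k < b) ('X + ((a - (k : nat)%:Z)%:~R)%:P).

Definition MH_expr (d : nat) (e : nat -> nat) : {poly rat} :=
  \sum_(i < d.+1) (binom (i : nat)%:Z i.+1 - binom ((i : nat)%:Z - (e i)%:Z) i.+1).

Definition Gotzmann_expr (r : nat) (b : nat -> nat) : {poly rat} :=
  \sum_(1 <= j < r.+1) binom ((b j)%:Z - (j.-1)%:Z) (b j).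

From mathcomp Require Import all_boot all_order all_algebra.
From mathcomp Require Import ring zify.
Set Implicit Arguments. Unset Strict Implicit. Unset Printing Implicit Defensive.
Import GRing.Theory Num.Theory.

(* Evaluated at a rational point, the i-th Macaulay-Hartshorne summand telescopes by
   Pascal's rule into sum_(m < e_i) binom(t + i - 1 - m, i).  After exchanging the two
   sums, for fixed m the indices i with m < e_i form the initial segment 0..b_(m+1),
   where b is the partition conjugate to e, and the hockey-stick identity collapses the
   inner sum: this is the Gotzmann expression with the e_0 parts b_1, ..., b_(e_0).
   Gotzmann expressions with nonincreasing parts are unique: the difference operator
   P(t) - P(t-1) maps the expression with parts b to the one with parts b_j - 1 over
   the positive b_j, and each zero part contributes the constant 1; so induction on
   the largest part recovers first the positive parts and then their number r. *)

Definition nonincreasing_on (lo hi : nat) (f : nat -> nat) :=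
  forall i, lo <= i -> i < hi -> f i.+1 <= f i.

Lemma nonincreasing_on_le lo hi f : nonincreasing_on lo hi f ->
  forall i j, lo <= i <= j -> j <= hi -> f j <= f i.
Proof.
move=> f_noninc i j /andP[lo_i ij] j_hi.
apply: (@homo_leq_in nat [pred k | lo <= k <= hi] f (fun x y => y <= x)) => //.
- by move=> y x z /[swap]; apply: leq_trans.
- by move=> k l; rewrite !inE => /andP[lo_k _] /andP[_ l_hi] m /andP[km ml]; rewrite inE; lia.
- by move=> k; rewrite !inE => /andP[lo_k _] /andP[_ k_hi]; apply: f_noninc.
- by rewrite inE lo_i; lia.
- by rewrite inE j_hi; lia.
Qed.

Lemma nonincreasing_on_pred lo hi s f : s <= hi -> nonincreasing_on lo hi f ->
  nonincreasing_on lo s (fun j => (f j).-1).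
Proof. by move=> s_le f_noninc j lo_j j_s; have := f_noninc j lo_j; lia. Qed.

Lemma count_prefix (P : pred nat) n :
  (forall i, 0 < i < n -> P i.+1 -> P i) ->
  forall i, 0 < i <= n -> P i = (i <= count P (iota 1 n)).
Proof.
elim: n => [|n IH] P_down i /andP[i_gt0 i_le].
  by rewrite leqn0 in i_le; rewrite (eqP i_le) in i_gt0.
have count_le : count P (iota 1 n) <= n.
  by rewrite -[X in _ <= X](size_iota 1 n) count_size.
have IHn k : 0 < k <= n -> P k = (k <= count P (iota 1 n)).
  by apply: IH => l /andP[? ?]; apply: P_down; lia.
rewrite -[n.+1]addn1 iotaD count_cat /= addn0 add1n.
have [Pn1|nPn1] := boolP (P n.+1); last first.
  rewrite addn0; case: (ltnP n i) => [n_lt_i|i_le_n]; last by rewrite IHn ?i_gt0.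
  have -> : i = n.+1 by apply/eqP; rewrite eqn_leq i_le.
  by rewrite (negbTE nPn1) leqNgt ltnS count_le.
have full : count P (iota 1 n) = n.
  apply/eqP; rewrite eqn_leq count_le /=.
  case: (posnP n) => [->//|n_gt0]; rewrite -IHn ?n_gt0 ?leqnn //.
  by apply: (P_down n _ Pn1); rewrite n_gt0 ltnSn.
rewrite full addn1; case: (ltnP n i) => [n_lt_i|i_le_n].
  have -> : i = n.+1 by apply/eqP; rewrite eqn_leq i_le.
  by rewrite Pn1 leqnn.
by rewrite IHn ?i_gt0 // full i_le_n (leqW i_le_n).
Qed.

Lemma count_iota_interval lo hi n : lo <= hi ->
  count (fun j => lo < j <= hi) (iota 1 n) = minn n hi - minn n lo.
Proof.
move=> lo_hi; elim: n => [|n IH]; first by rewrite !min0n.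
rewrite -[n.+1]addn1 iotaD count_cat IH /= addn0 add1n.
by case: (boolP (lo < n.+1 <= hi)) => /=; lia.
Qed.

Definition conj_part (d : nat) (e : nat -> nat) (j : nat) : nat :=
  count (fun i => j <= e i) (iota 1 d).

Lemma conj_part_le d e j : conj_part d e j <= d.
Proof. by rewrite -[X in _ <= X](size_iota 1 d) count_size. Qed.

Lemma conj_partS_le d e j : conj_part d e j.+1 <= conj_part d e j.
Proof. by apply: sub_count => i /ltnW. Qed.

Lemma conj_partP d e : nonincreasing_on 0 d e ->
  forall j i, j <= e 0 -> i <= d -> (j <= e i) = (i <= conj_part d e j).
Proof.
move=> e_noninc j [|i] j_e0 i_d; first by rewrite j_e0.
apply: (count_prefix (P := fun i => j <= e i)) => [k /andP[_ k_d] /leq_trans|]; last by rewrite i_d.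
by apply; apply: e_noninc.
Qed.

Lemma count_conj_part d e i : nonincreasing_on 0 d e -> 0 < i <= d ->
  count (fun j => conj_part d e j == i) (iota 1 (e 0)) =
  e i - (if i == d then 0 else e i.+1).
Proof.
move=> e_noninc /andP[i_gt0 i_d].
have ei_le_e0 : e i <= e 0 by apply: (nonincreasing_on_le e_noninc).
set lo := if i == d then 0 else e i.+1.
have lo_le : lo <= e i by rewrite /lo; case: eqP => // /eqP i_neq_d; apply: e_noninc; lia.
rewrite (eq_in_count (a2 := fun j => lo < j <= e i)); first by rewrite count_iota_interval //; lia.
move=> j; rewrite mem_iota => /andP[j_gt0 j_e0].
have conj_le := conj_part_le d e j.
rewrite (conj_partP e_noninc) //.
rewrite /lo; case: (eqVneq i d) => [-> | i_neq_d]; first by rewrite eqn_leq conj_le j_gt0.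
rewrite ltnNge (conj_partP e_noninc) //; last by lia.
by rewrite -ltnNge ltnS eqn_leq andbC.
Qed.

Local Open Scope ring_scope.

Lemma big_nat_prefix (V : nmodType) (F : nat -> V) (P : pred nat) n s :
  (s <= n)%N -> (forall i, (i < n)%N -> P i = (i < s)%N) ->
  \sum_(0 <= i < n | P i) F i = \sum_(0 <= i < s) F i.
Proof.
move=> s_le_n P_prefix; rewrite (big_nat_widen _ _ _ _ _ s_le_n).
by apply: congr_big_nat => // i /andP[_ /P_prefix].
Qed.

Lemma poly_eq_horner (R : numDomainType) (p q : {poly R}) :
  (forall x, p.[x] = q.[x]) -> p = q.
Proof.
move=> pq; apply/eqP; rewrite -subr_eq0; apply/eqP.
apply: (@roots_geq_poly_eq0 _ _ [seq n%:R | n <- iota 0 (size (p - q))]).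
- by apply/allP => _ /mapP[n _ ->]; rewrite rootE hornerD hornerN pq subrr.
- by rewrite map_inj_uniq ?iota_uniq // => m n /eqP; rewrite eqr_nat => /eqP.
- by rewrite size_map size_iota.
Qed.

Section Gotzmann.
Variable R : numFieldType.

Definition gbinom (y : R) (k : nat) : R := (k`!%:R)^-1 * \prod_(i < k) (y - i%:R).

Lemma gbinom0 y : gbinom y 0 = 1.
Proof. by rewrite /gbinom big_ord0 fact0 invr1 mulr1. Qed.

Lemma gbinomS_sub1 y k : gbinom y k.+1 - gbinom (y - 1) k.+1 = gbinom (y - 1) k.
Proof.
rewrite /gbinom big_ord_recl big_ord_recr /=.
set Q := \prod_(i < k) (y - 1 - i%:R).
have -> : \prod_(i < k) (y - (bump 0 i)%:R) = Q.
  by apply: eq_bigr => i _; rewrite /bump /= add1n -natr1; ring.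
have fact_neq0 : (k`!%:R : R) != 0 by rewrite pnatr_eq0 -lt0n fact_gt0.
have kS_neq0 : (k%:R + 1 : R) != 0 by rewrite natr1 pnatr_eq0.
rewrite factS natrM -natr1; field.
by rewrite fact_neq0 kS_neq0.
Qed.

Lemma gbinomS_sub_nat y k n :
  gbinom y k.+1 - gbinom (y - n%:R) k.+1 = \sum_(m < n) gbinom (y - 1 - m%:R) k.
Proof.
elim: n => [|n IH]; first by rewrite big_ord0 subr0 subrr.
rewrite big_ord_recr /= -IH -natr1.
have := gbinomS_sub1 (y - n%:R) k.
by rewrite opprD addrA [y - 1 - _]addrAC => <-; ring.
Qed.

Lemma sum_gbinom_diag z k :
  \sum_(i < k.+1) gbinom (z + i%:R) i = gbinom (z + k%:R + 1) k.
Proof.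
elim: k => [|k IH]; first by rewrite big_ord1 !gbinom0.
rewrite big_ord_recr /= IH.
have := gbinomS_sub1 (z + k.+1%:R + 1) k.
by rewrite addrK -natr1 !addrA => <-; rewrite subrK.
Qed.

Definition gotzmann_fun (r : nat) (b : nat -> nat) (x : R) : R :=
  \sum_(1 <= j < r.+1) gbinom (x + (b j)%:R - (j.-1)%:R) (b j).

Definition npos (r : nat) (b : nat -> nat) : nat := count (fun j => 0 < b j)%N (iota 1 r).

Lemma npos_le r b : (npos r b <= r)%N.
Proof. by rewrite -[X in (_ <= X)%N](size_iota 1 r) count_size. Qed.

Lemma nposP r b : nonincreasing_on 1 r b ->
  forall j, (0 < j <= r)%N -> (0 < b j)%N = (j <= npos r b)%N.
Proof.
move=> b_noninc; apply: count_prefix => j /andP[j_gt0 j_r].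
by move=> b_pos; apply: leq_trans b_pos (b_noninc j j_gt0 j_r).
Qed.

Lemma gotzmann_fun_npos r b x : nonincreasing_on 1 r b ->
  gotzmann_fun r b x = gotzmann_fun (npos r b) b x + (r - npos r b)%:R.
Proof.
move=> b_noninc; rewrite /gotzmann_fun (@big_cat_nat _ _ _ (npos r b).+1) //=; last first.
  by rewrite ltnS npos_le.
congr (_ + _); rewrite -(subSS (npos r b) r) -sumr_const_nat.
apply: eq_big_nat => j /andP[s_lt_j j_le_r].
suff -> : b j = 0%N by rewrite gbinom0.
by apply/eqP; rewrite -leqn0 leqNgt (nposP b_noninc); lia.
Qed.

Lemma gotzmann_fun_sub1 r b x : nonincreasing_on 1 r b ->
  gotzmann_fun r b x - gotzmann_fun r b (x - 1) =
  gotzmann_fun (npos r b) (fun j => (b j).-1) x.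
Proof.
move=> b_noninc; rewrite !(gotzmann_fun_npos _ b_noninc) opprD addrACA subrr addr0.
rewrite /gotzmann_fun -sumrB; apply: eq_big_nat => j /andP[j_gt0 j_le_s].
have b_pos : (0 < b j)%N by rewrite (nposP b_noninc); have := npos_le r b; lia.
case: (b j) b_pos => // c _.
have -> : x - 1 + c.+1%:R - (j.-1)%:R = x + c.+1%:R - (j.-1)%:R - 1 by ring.
by rewrite gbinomS_sub1 -natr1; congr gbinom; ring.
Qed.

Lemma gotzmann_fun_eq_of_pred r b r' b' :
  nonincreasing_on 1 r b -> nonincreasing_on 1 r' b' ->
  npos r' b' = npos r b ->
  (forall j, (0 < j <= npos r b)%N -> (b j).-1 = (b' j).-1) ->
  gotzmann_fun r b 0 = gotzmann_fun r' b' 0 ->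
  r = r' /\ (forall j, (0 < j <= r)%N -> b j = b' j).
Proof.
move=> b_noninc b'_noninc s_eq pred_eq G_eq.
have s_le_r := npos_le r b; have s_le_r' := npos_le r' b'.
have pos_eq j : (0 < j <= npos r b)%N -> b j = b' j.
  move=> j_s; have := pred_eq j j_s.
  have := nposP b_noninc (j := j); have := nposP b'_noninc (j := j); rewrite s_eq; lia.
have r_eq : r = r'.
  move: G_eq; rewrite (gotzmann_fun_npos _ b_noninc) (gotzmann_fun_npos _ b'_noninc) s_eq.
  have -> : gotzmann_fun (npos r b) b' 0 = gotzmann_fun (npos r b) b 0.
    by apply: eq_big_nat => j j_s; rewrite pos_eq.
  by move/addrI/eqP; rewrite eqr_nat => /eqP; lia.
split=> // j j_r; case: (leqP j (npos r b)) => [j_s|s_j]; first by apply: pos_eq; lia.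
subst r'; have := nposP b_noninc j_r; have := nposP b'_noninc j_r; rewrite s_eq; lia.
Qed.

Lemma npos_eq0 r b : (forall j, (0 < j <= r)%N -> b j = 0%N) -> npos r b = 0%N.
Proof.
move=> b0; rewrite /npos (eq_in_count (a2 := pred0)) ?count_pred0 // => j.
by rewrite mem_iota /= => j_r; rewrite b0 //; lia.
Qed.

Lemma gotzmann_fun_inj_bounded B r b r' b' :
  nonincreasing_on 1 r b -> nonincreasing_on 1 r' b' ->
  (forall j, (0 < j <= r)%N -> (b j <= B)%N) ->
  (forall j, (0 < j <= r')%N -> (b' j <= B)%N) ->
  gotzmann_fun r b =1 gotzmann_fun r' b' ->
  r = r' /\ (forall j, (0 < j <= r)%N -> b j = b' j).
Proof.
elim: B r b r' b' => [|B IH] r b r' b' b_noninc b'_noninc b_le b'_le G_eq.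
  have [b0 b'0] : npos r b = 0%N /\ npos r' b' = 0%N.
    by split; apply: npos_eq0 => j j_r; apply/eqP; rewrite -leqn0; [apply: b_le | apply: b'_le].
  by apply: (gotzmann_fun_eq_of_pred b_noninc b'_noninc _ _ (G_eq 0)); rewrite ?b0 // => j; lia.
have pred_le r0 b0 : (forall j, (0 < j <= r0)%N -> (b0 j <= B.+1)%N) ->
    forall j, (0 < j <= npos r0 b0)%N -> ((b0 j).-1 <= B)%N.
  by move=> b0_le j j_s; have := npos_le r0 b0; have := b0_le j; lia.
have pred_G : gotzmann_fun (npos r b) (fun j => (b j).-1) =1
              gotzmann_fun (npos r' b') (fun j => (b' j).-1).
  by move=> x; rewrite -!gotzmann_fun_sub1 // !G_eq.
have [s_eq pred_eq] := IH _ _ _ _ (nonincreasing_on_pred (npos_le r b) b_noninc)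
  (nonincreasing_on_pred (npos_le r' b') b'_noninc) (pred_le _ _ b_le) (pred_le _ _ b'_le) pred_G.
exact: gotzmann_fun_eq_of_pred b_noninc b'_noninc (esym s_eq) pred_eq (G_eq 0).
Qed.

Lemma gotzmann_fun_inj r b r' b' :
  nonincreasing_on 1 r b -> nonincreasing_on 1 r' b' ->
  gotzmann_fun r b =1 gotzmann_fun r' b' ->
  r = r' /\ (forall j, (0 < j <= r)%N -> b j = b' j).
Proof.
move=> b_noninc b'_noninc; apply: (gotzmann_fun_inj_bounded (B := b 1 + b' 1)) => //.
- move=> j /andP[j_gt0 j_r]; rewrite (leq_trans _ (leq_addr _ _)) //.
  by rewrite (nonincreasing_on_le b_noninc) ?j_gt0.
- move=> j /andP[j_gt0 j_r]; rewrite (leq_trans _ (leq_addl _ _)) //.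
  by rewrite (nonincreasing_on_le b'_noninc) ?j_gt0.
Qed.

End Gotzmann.

Lemma horner_binom a k x : (binom a k).[x] = gbinom (x + a%:~R) k.
Proof.
rewrite /binom /gbinom hornerZ horner_prod; congr (_ * _).
by apply: eq_bigr => i _; rewrite hornerD hornerX hornerC intrB -pmulrn; ring.
Qed.

Lemma horner_Gotzmann_expr r b x : (Gotzmann_expr r b).[x] = gotzmann_fun r b x.
Proof.
rewrite /Gotzmann_expr horner_sum; apply: eq_bigr => j _.
by rewrite horner_binom intrB -!pmulrn addrA.
Qed.

Lemma horner_MH_expr d e x : (MH_expr d e).[x] =
  \sum_(0 <= i < d.+1) (gbinom (x + i%:R) i.+1 - gbinom (x + i%:R - (e i)%:R) i.+1).
Proof.
rewrite /MH_expr horner_sum big_mkord; apply: eq_bigr => i _.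
by rewrite hornerD hornerN !horner_binom intrB -!pmulrn addrA.
Qed.

Lemma MH_expr_conj d e : nonincreasing_on 0 d e ->
  MH_expr d e = Gotzmann_expr (e 0) (conj_part d e).
Proof.
move=> e_noninc; apply: poly_eq_horner => x.
rewrite horner_MH_expr horner_Gotzmann_expr /gotzmann_fun big_add1 /=.
pose F i m := gbinom (x - 1 - m%:R + i%:R) i.
have row i : (i < d.+1)%N -> gbinom (x + i%:R) i.+1 - gbinom (x + i%:R - (e i)%:R) i.+1 =
    \sum_(0 <= m < e 0 | (m < e i)%N) F i m.
  move=> i_d; rewrite gbinomS_sub_nat (big_nat_prefix _ (n := e 0) (s := e i)) //.
    by rewrite big_mkord; apply: eq_bigr => m _; congr gbinom; ring.
  by rewrite (nonincreasing_on_le e_noninc) // -ltnS.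
have column m : (m < e 0)%N -> \sum_(0 <= i < d.+1 | (m < e i)%N) F i m =
    gbinom (x + (conj_part d e m.+1)%:R - m%:R) (conj_part d e m.+1).
  move=> m_e0; rewrite (big_nat_prefix _ (s := (conj_part d e m.+1).+1)); last 2 first.
  - by rewrite ltnS conj_part_le.
  - by move=> i; rewrite !ltnS => i_d; rewrite -(conj_partP e_noninc).
  by rewrite big_mkord sum_gbinom_diag; congr gbinom; ring.
rewrite (eq_big_nat _ _ (fun i (i_d : (0 <= i < d.+1)%N) => row i (andP i_d).2)).
by rewrite (exchange_big_dep_nat xpredT) //=; apply: eq_big_nat => m /andP[_ /column].
Qed.

Lemma Gotzmann_expr_inj r b r' b' :
  nonincreasing_on 1 r b -> nonincreasing_on 1 r' b' ->
  Gotzmann_expr r b = Gotzmann_expr r' b' ->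
  r = r' /\ (forall j, (0 < j <= r)%N -> b j = b' j).
Proof.
move=> b_noninc b'_noninc G_eq; apply: (gotzmann_fun_inj (R := rat)) => // x.
by rewrite -!horner_Gotzmann_expr G_eq.
Qed.

Theorem lemma2p4 (P : {poly rat}) (d : nat) (e : nat -> nat) (r : nat) (b : nat -> nat) :
  (forall i, (i < d)%N -> (e i.+1 <= e i)%N) ->
  (0 < e d)%N ->
  P = MH_expr d e ->
  (forall j, (1 <= j)%N -> (j < r)%N -> (b j.+1 <= b j)%N) ->
  P = Gotzmann_expr r b ->
  r = e 0%N /\
  (forall i, (1 <= i <= d)%N ->
     count (fun j => b j == i) (iota 1 r) = (e i - (if i == d then 0 else e i.+1))%N) /\
  (forall j, (1 <= j <= r)%N -> b j = 0%N \/ (1 <= b j <= d)%N).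
Proof.
move=> e_noninc _ P_MH b_noninc P_G.
have e_noninc_on : nonincreasing_on 0 d e by move=> i _; apply: e_noninc.
have [r_eq b_conj] : r = e 0%N /\ (forall j, (0 < j <= r)%N -> b j = conj_part d e j).
  apply: Gotzmann_expr_inj b_noninc (fun j _ _ => conj_partS_le d e j) _.
  by rewrite -P_G P_MH MH_expr_conj.
subst r; split=> //; split=> [i i_d | j j_r].
  rewrite -(count_conj_part e_noninc_on i_d); apply: eq_in_count => j.
  by rewrite mem_iota add1n => j_r /=; rewrite b_conj.
by rewrite b_conj //; have := conj_part_le d e j; lia.
Qed.
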